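(* Let $R$ be a discrete valuation ring with uniformizer $\pi$ and fraction field $F$. Let $n=n_1+\cdots+n_m$ and consider the subgroups $L=\mathrm{GL}_{n_1}\times\cdots\times\mathrm{GL}_{n_m}$ (block diagonal) $\subset P$ (block lower triangular with diagonal blocks $\mathrm{GL}_{n_1},\dots,\mathrm{GL}_{n_m}$) $\subset\mathrm{GL}_n$. Let $g\in P(F)$ and let $g_L\in L(F)$ be its block-diagonal part (its image in the Levi quotient). Put $N_l=n_1+\cdots+n_l$ for $0\le l\le m$. Let $k_1\ge\cdots\ge k_n$ be integers and assume that for every $0\le l\le m-1$ the matrix $(g_{ij})_{N_l+1\le i,j\le n}\in\mathrm{GL}_{n-N_l}(F)$ has type $(k_{N_l+1},\dots,k_n)$. Then $g_L^{-1}g\in P(R)$.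
   Context: For integers $k_1\ge\cdots\ge k_r$, an element $h\in\mathrm{GL}_r(F)$ has type $(k_1,\dots,k_r)$ if $h\in\mathrm{GL}_r(R)\,\mathrm{diag}(\pi^{k_1},\dots,\pi^{k_r})\,\mathrm{GL}_r(R)$. *)

From HB Require Import structures.
From mathcomp Require Import all_boot all_order all_algebra.
Set Implicit Arguments. Unset Strict Implicit. Unset Printing Implicit Defensive.
Import Order.TTheory GRing.Theory Num.Theory.
Local Open Scope ring_scope.

(* A discrete valuation ring R with uniformizer pi and fraction field F is
   encoded as a predicate R on a field F such that: R is a subring of F,
   pi \in R, pi^-1 \notin R (pi is not a unit of R), and every nonzero x of F
   is u * pi^k with u a unit of R and k an integer. *)
Definition is_DVR (F : fieldType) (R : {pred F}) (pi : F) : Prop :=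
  [/\ 1 \in R /\ (forall x y, x \in R -> y \in R -> x - y \in R),
      (forall x y, x \in R -> y \in R -> x * y \in R),
      pi \in R, pi^-1 \notin R &
      (forall x : F, x != 0 -> exists u : F, exists k : int,
          [/\ u \in R, u^-1 \in R & x = u * pi ^ k])].

Definition GL_over (F : fieldType) (R : {pred F}) r (A : 'M[F]_r) : Prop :=
  [/\ A \in unitmx, (forall i j, A i j \in R) & (forall i j, invmx A i j \in R)].

Definition has_type (F : fieldType) (R : {pred F}) (pi : F) r
    (A : 'M[F]_r) (k : 'I_r -> int) : Prop :=
  exists U V : 'M[F]_r, [/\ GL_over R U, GL_over R V &
     A = U *m diag_mx (\row_i (pi ^ (k i))) *m V].

Definition Npart (ns : seq nat) (l : nat) : nat := sumn (take l ns).

Definition block_lower (F : fieldType) (ns : seq nat) (g : 'M[F]_(sumn ns)) : Prop :=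
  forall (l : nat) (i j : 'I_(sumn ns)),
    (l <= size ns)%N -> (i < Npart ns l <= j)%N -> g i j = 0.

Definition sep_blocks (ns : seq nat) (i j : nat) : bool :=
  has (fun l => ((i < Npart ns l <= j) || (j < Npart ns l <= i))%N)
      (iota 0 (size ns).+1).

Definition levi_part (F : fieldType) (ns : seq nat) (g : 'M[F]_(sumn ns)) :
  'M[F]_(sumn ns) :=
  \matrix_(i, j) (if sep_blocks ns i j then 0 else g i j).

Lemma shift_ord_proof n a (i : 'I_(n - a)) : (a + i < n)%N.
Proof. by rewrite -ltn_subRL. Qed.

Definition shift_ord n a (i : 'I_(n - a)) : 'I_n :=
  Ordinal (shift_ord_proof i).

(* lower-right submatrix (g_ij)_{a+1 <= i,j <= n} (1-based) *)
Definition lr_sub (F : fieldType) n (a : nat) (g : 'M[F]_n) : 'M[F]_(n - a) :=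
  \matrix_(i, j) g (shift_ord i) (shift_ord j).

Arguments block_lower {F} ns g.
Arguments levi_part {F} ns g.
Arguments sep_blocks ns i j.
Arguments lr_sub {F n} a g.
Arguments shift_ord {n} a i.
Arguments has_type {F} R pi {r} A k.
Arguments GL_over {F} R {r} A.
Arguments is_DVR {F} R pi.

From HB Require Import structures.
From mathcomp Require Import all_boot all_order all_algebra perm.
Set Implicit Arguments. Unset Strict Implicit. Unset Printing Implicit Defensive.
Import Order.TTheory GRing.Theory Num.Theory.
Local Open Scope ring_scope.

(* Put Z := g_L^-1 g.  For a block start a = N_l let D_a be the lower-right square of g
   from a on and X_a := D_a^-1 E_a, where E_a consists of the rows of g from a on.  As g is
   block lower triangular, the rows of Z in the block starting at a are the first rows of
   X_a; hence Z is block lower unitriangular, det Z = 1, and it suffices that every X_a has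
   entries in R.  By Cramer's rule an entry of X_a is det D' / det D_a, where D' = E_a Q for
   a 0/1 matrix Q.  Writing g = U diag(pi^k) V with U, V in GL_n(R), Cauchy-Binet expands
   det D' into terms divisible by pi^(k_(a+1) + ... + k_n), the least sum of n - a of the
   nonincreasing k_i, while det D_a is a unit times exactly this power because D_a has type
   (k_(a+1), ..., k_n). *)

Lemma det_mulmx_rect (K : comNzRingType) r n (A : 'M[K]_(r, n)) (B : 'M[K]_(n, r)) :
  \det (A *m B) = \sum_(f : {ffun 'I_r -> 'I_n})
      (\prod_i A i (f i)) * \det (\matrix_(i, j) B (f i) j).
Proof.
rewrite /(\det (A *m B)).
transitivity (\sum_(s : 'S_r) \sum_(f : {ffun 'I_r -> 'I_n})
   (-1) ^+ s * ((\prod_i A i (f i)) * \prod_i B (f i) (s i))).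
  apply: eq_bigr => s _; rewrite -big_distrr /=; congr (_ * _).
  under eq_bigr do rewrite mxE.
  rewrite (bigA_distr_bigA (fun i j => A i j * B j (s i))) /=.
  by apply: eq_bigr => f _; rewrite big_split.
rewrite exchange_big /=; apply: eq_bigr => f _.
rewrite /(\det _) big_distrr /=; apply: eq_bigr => s _.
by rewrite mulrCA; congr (_ * (_ * _)); apply: eq_bigr => i _; rewrite mxE.
Qed.

Lemma mulmx_invmx_cramer (F : fieldType) m n (D : 'M[F]_m) (E : 'M[F]_(m, n)) p t :
  D \in unitmx ->
  (invmx D *m E) p t = (\det D)^-1 * \det (\matrix_(i, j) if j == p then E i t else D i j).
Proof.
move=> Du; rewrite mxE /invmx Du [\det (\matrix_(i, j) _)](expand_det_col _ p) big_distrr /=.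
apply: eq_bigr => q _; rewrite !mxE eqxx -mulrA [E q t * _]mulrC; congr (_ * (_ * _)).
rewrite /cofactor; congr (_ * \det _).
by apply/matrixP => i j; rewrite !mxE eq_sym (negPf (neq_lift _ _)).
Qed.

Lemma prodr_expz (F : fieldType) (I : finType) (P : pred I) (x : F) (e : I -> int) :
  x != 0 -> \prod_(i | P i) x ^ e i = x ^ (\sum_(i | P i) e i).
Proof.
move=> x0; apply: (big_ind2 (fun a b => a = x ^ b)) => // a1 b1 a2 b2 -> ->.
by rewrite expfzDr.
Qed.

Lemma shift_ord_inj n a : injective (@shift_ord n a).
Proof. by move=> x y /(congr1 val) /addnI; apply: val_inj. Qed.

Lemma shift_ordP n a (t : 'I_n) : (a <= t)%N -> exists q : 'I_(n - a), shift_ord a q = t.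
Proof.
move=> le_at; have lt : (t - a < n - a)%N by rewrite ltn_sub2r // (leq_ltn_trans le_at).
by exists (Ordinal lt); apply: val_inj; rewrite /= subnKC.
Qed.

Lemma mem_shift_ord n a (t : 'I_n) :
  (t \in [set shift_ord a q | q in [set: 'I_(n - a)]]) = (a <= t)%N.
Proof.
apply/imsetP/idP => [[q _ ->]|/shift_ordP[q <-]]; first exact: leq_addr.
by exists q.
Qed.

Lemma sum_shift_ord_le_inj (V : numDomainType) n a (k : 'I_n -> V)
    (Hk : forall i j : 'I_n, (i <= j)%N -> k j <= k i)
    (f : 'I_(n - a) -> 'I_n) : injective f ->
  \sum_q k (shift_ord a q) <= \sum_q k (f q).
Proof.
move=> injf; have [lt_an|le_na] := ltnP a n; last first.
  have na0 : (n - a = 0)%N by apply/eqP; rewrite subn_eq0.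
  by rewrite !big1 // => q; have := ltn_ord q; rewrite {2}na0.
(* Shifting by tau = k a makes the terms outside the common part of the two index sets
   nonpositive on the left and nonnegative on the right. *)
pose tau := k (Ordinal lt_an).
suff : \sum_q (k (shift_ord a q) - tau) <= \sum_q (k (f q) - tau).
  by rewrite !sumrB lerD2r.
set J := [set f q | q in [set: 'I_(n - a)]].
set L := [set shift_ord a q | q in [set: 'I_(n - a)]].
have sum_img (h : 'I_(n - a) -> 'I_n) : injective h ->
    \sum_q (k (h q) - tau) = \sum_(t in [set h q | q in [set: 'I_(n - a)]]) (k t - tau).
  move=> injh; rewrite big_imset /=; last by move=> ? ? _ _ /injh.
  by apply: eq_bigl => q; rewrite in_setT.
rewrite (sum_img _ injf) (sum_img _ (@shift_ord_inj n a)) -/J -/L.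
rewrite (bigID (mem J)) [X in _ <= X](bigID (mem L)) /=.
rewrite (eq_bigl (fun t => (t \in J) && (t \in L))) => [|t]; last by rewrite andbC.
rewrite lerD2l; apply: (@le_trans _ _ 0).
  apply: sumr_le0 => t /andP[tL _]; rewrite subr_le0; apply: Hk.
  by rewrite mem_shift_ord in tL.
apply: sumr_ge0 => t /andP[_ tL]; rewrite subr_ge0; apply: Hk.
by rewrite mem_shift_ord -ltnNge in tL; apply: ltnW.
Qed.

Lemma has_type_cast (F : fieldType) (R : {pred F}) pi m n (e : m = n)
    (A : 'M[F]_m) (B : 'M[F]_n) k k' :
  (forall i j, A i j = B (cast_ord e i) (cast_ord e j)) ->
  (forall i, k i = k' (cast_ord e i)) ->
  has_type R pi A k -> has_type R pi B k'.
Proof.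
case: n / e B k' => B k' AB kk' [U [V [UGL VGL AE]]]; exists U, V; split => //.
have -> : \row_i pi ^ k' i = \row_i pi ^ k i.
  by apply/rowP => x; rewrite !mxE kk' cast_ord_id.
by apply/matrixP => i j; rewrite -AE AB !cast_ord_id.
Qed.

Lemma has_type_lr_sub0 (F : fieldType) (R : {pred F}) pi n a (g : 'M[F]_n) k :
  a = 0%N -> has_type R pi (lr_sub a g) (fun i => k (shift_ord a i)) -> has_type R pi g k.
Proof.
move=> -> g0type; apply: (has_type_cast (e := subn0 n) _ _ g0type) => [i j|i].
  by rewrite mxE; congr (g _ _); apply: val_inj.
by congr (k _); apply: val_inj.
Qed.

Definition lr_solve (F : fieldType) n a (g : 'M[F]_n) : 'M[F]_(n - a, n) :=
  invmx (lr_sub a g) *m rowsub (shift_ord a) g.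

Lemma colsub_lr_solve (F : fieldType) n a (g : 'M[F]_n) :
  lr_sub a g \in unitmx -> colsub (shift_ord a) (lr_solve a g) = 1%:M.
Proof.
move=> Du; rewrite -mulmx_colsub (_ : colsub _ _ = lr_sub a g) ?mulVmx //.
by apply/matrixP => i j; rewrite !mxE.
Qed.

Lemma rowsub_mulmx_lr_solve (F : fieldType) n a (g : 'M[F]_n) :
  lr_sub a g \in unitmx ->
  rowsub (shift_ord a) (colsub (shift_ord a) g *m lr_solve a g) = rowsub (shift_ord a) g.
Proof.
move=> Du; rewrite -mul_rowsub_mx (_ : rowsub _ _ = lr_sub a g) ?mulKVmx //.
by apply/matrixP => i j; rewrite !mxE.
Qed.

Lemma colsub1_mulmx_shift (F : fieldType) n n' a (M : 'M[F]_(n - a, n')) p j :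
  (colsub (shift_ord a) 1%:M *m M) (shift_ord a p) j = M p j.
Proof.
rewrite mxE (bigD1 p) //= big1 => [|q ne_qp]; rewrite !mxE ?eqxx ?mul1r ?addr0 //.
by rewrite (inj_eq (@shift_ord_inj n a)) eq_sym (negPf ne_qp) mul0r.
Qed.

Lemma colsub1_mulmx_lt (F : fieldType) n n' a (M : 'M[F]_(n - a, n')) (i : 'I_n) j :
  (i < a)%N -> (colsub (shift_ord a) 1%:M *m M) i j = 0.
Proof.
move=> lt_ia; rewrite mxE big1 // => q _; rewrite !mxE.
suff /negPf-> : i != shift_ord a q by rewrite mul0r.
by rewrite -val_eqE neq_ltn /= (leq_trans lt_ia) ?leq_addr.
Qed.

Lemma colsub1_mulmx_lr_solve (F : fieldType) n a (g : 'M[F]_n) (i j : 'I_n) :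
  lr_sub a g \in unitmx -> (a <= i)%N -> (a <= j)%N ->
  (colsub (shift_ord a) 1%:M *m lr_solve a g) i j = (i == j)%:R.
Proof.
move=> Du /shift_ordP[p <-] /shift_ordP[q <-]; rewrite colsub1_mulmx_shift.
have /matrixP/(_ p q) := colsub_lr_solve Du; rewrite !mxE => ->.
by rewrite (inj_eq (@shift_ord_inj n a)).
Qed.

Section Partition.
Variable ns : seq nat.
Local Notation N := (Npart ns).

Lemma leq_Npart l l' : (l <= l')%N -> (N l <= N l')%N.
Proof. by move=> le_ll'; rewrite /Npart -(subnKC le_ll') takeD sumn_cat leq_addr. Qed.

Lemma Npart_oversize l : (size ns <= l)%N -> N l = sumn ns.
Proof. by move=> le_sl; rewrite /Npart take_oversize. Qed.

Lemma Npart0 : N 0 = 0%N.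
Proof. by case: ns. Qed.

Definition block_of (i : nat) : nat := find (fun l => i < N l.+1)%N (iota 0 (size ns)).

Definition block_start (i : nat) : nat := N (block_of i).

Variable i : nat.
Hypothesis lt_i_n : (i < sumn ns)%N.

Lemma block_of_lt_size : (block_of i < size ns)%N.
Proof.
rewrite /block_of -[X in (_ < X)%N](size_iota 0) -has_find.
have ns_gt0 : (0 < size ns)%N by rewrite lt0n size_eq0; apply: contraTneq lt_i_n => ->.
apply/hasP; exists (size ns).-1; first by rewrite mem_iota add0n ltn_predL.
by rewrite prednK // Npart_oversize.
Qed.

Lemma block_start_le : (block_start i <= i)%N.
Proof.
rewrite /block_start; case def_b: (block_of i) => [|b]; first by rewrite Npart0.
have /(before_find 0) : (b < block_of i)%N by rewrite def_b.
have lt_b_size : (b < size ns)%N by apply: (ltn_trans _ block_of_lt_size); rewrite def_b.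
by rewrite nth_iota // add0n => /negbT; rewrite -leqNgt.
Qed.

Lemma ltn_Npart_block_of : (i < N (block_of i).+1)%N.
Proof.
have has_b : has (fun l => i < N l.+1)%N (iota 0 (size ns)).
  by rewrite has_find size_iota block_of_lt_size.
by have := nth_find 0 has_b; rewrite nth_iota ?add0n //; apply: block_of_lt_size.
Qed.

Lemma block_of_lt l : (i < N l)%N -> (block_of i < l)%N.
Proof.
apply: contraTT; rewrite -!leqNgt => /leq_Npart le_N.
exact: leq_trans le_N block_start_le.
Qed.

Lemma leq_block_of l : (N l <= i)%N -> (l <= block_of i)%N.
Proof.
apply: contraTT; rewrite -!ltnNge => /leq_Npart le_N.
exact: leq_trans ltn_Npart_block_of le_N.
Qed.

End Partition.

Lemma sep_blocksE ns i j : (i < sumn ns)%N -> (j < sumn ns)%N ->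
  sep_blocks ns i j = (block_of ns i != block_of ns j).
Proof.
move=> lt_in lt_jn; apply/hasP/idP => [[l _ /orP[]/andP[lt_Nl le_Nl]] | ].
- by rewrite neq_ltn (leq_trans (block_of_lt lt_in lt_Nl) (leq_block_of lt_jn le_Nl)).
- by rewrite neq_ltn (leq_trans (block_of_lt lt_jn lt_Nl) (leq_block_of lt_in le_Nl)) orbT.
rewrite neq_ltn => /orP[lt_ij|lt_ji].
  exists (block_of ns i).+1; first by rewrite mem_iota add0n ltnS ltnW ?block_of_lt_size.
  by rewrite ltn_Npart_block_of //= (leq_trans (leq_Npart _ lt_ij) (block_start_le lt_jn)).
exists (block_of ns j).+1; first by rewrite mem_iota add0n ltnS ltnW ?block_of_lt_size.
by rewrite ltn_Npart_block_of //= (leq_trans (leq_Npart _ lt_ji) (block_start_le lt_in)) orbT.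
Qed.

(* Row i is the row of lr_solve a g indexed by i - a, a being the start of the block of i:
   colsub (shift_ord a) 1%:M *m M stacks a zero rows on top of M. *)
Definition levi_solve (F : fieldType) ns (g : 'M[F]_(sumn ns)) : 'M[F]_(sumn ns) :=
  \matrix_(i, j) (colsub (shift_ord (block_start ns i)) 1%:M
                  *m lr_solve (block_start ns i) g) i j.
Arguments levi_solve {F} ns g.

Section LeviSolve.
Variables (F : fieldType) (ns : seq nat) (g : 'M[F]_(sumn ns)).
Hypothesis lr_sub_unit :
  forall b, (b < size ns)%N -> lr_sub (Npart ns b) g \in unitmx.

Lemma levi_solve_diag (i j : 'I_(sumn ns)) :
  (block_start ns i <= j)%N -> levi_solve ns g i j = (i == j)%:R.
Proof.
move=> le_sj; rewrite mxE colsub1_mulmx_lr_solve //.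
  exact/lr_sub_unit/block_of_lt_size.
exact: block_start_le.
Qed.

Lemma levi_solve_det : \det (levi_solve ns g) = 1.
Proof.
rewrite det_trig; last first.
  apply/forallP => i; apply/forallP => j; apply/implyP => lt_ij.
  rewrite levi_solve_diag; last exact: leq_trans (block_start_le _) (ltnW lt_ij).
  by rewrite -val_eqE ltn_eqF.
by rewrite big1 // => i _; rewrite levi_solve_diag ?eqxx ?block_start_le.
Qed.

Lemma levi_solve_block_lower : block_lower ns (levi_solve ns g).
Proof.
move=> l i j _ /andP[lt_iN le_Nj].
have le_sN := leq_Npart ns (ltnW (block_of_lt (ltn_ord i) lt_iN)).
by rewrite levi_solve_diag ?(leq_trans le_sN) // -val_eqE ltn_eqF ?(leq_trans lt_iN).
Qed.

Lemma levi_partE (i t : 'I_(sumn ns)) :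
  levi_part ns g i t = if block_of ns i == block_of ns t then g i t else 0.
Proof. by rewrite mxE sep_blocksE //; case: eqP. Qed.

Hypothesis g_lower : block_lower ns g.

Lemma levi_part_mul_solve : levi_part ns g *m levi_solve ns g = g.
Proof.
apply/matrixP => i j; have lt_i := ltn_ord i; set a := block_start ns i.
have termE t : levi_part ns g i t * levi_solve ns g t j =
    g i t * (colsub (shift_ord a) 1%:M *m lr_solve a g) t j.
  rewrite levi_partE [levi_solve _ _ t j]mxE.
  have [eq_b|] := eqVneq (block_of ns i) (block_of ns t); first by rewrite /a /block_start eq_b.
  rewrite neq_ltn mul0r => /orP[lt_it|lt_ti].
    rewrite (g_lower (block_of_lt_size lt_i)) ?mul0r // ltn_Npart_block_of //.
    exact: leq_trans (leq_Npart _ lt_it) (block_start_le (ltn_ord t)).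
  rewrite colsub1_mulmx_lt ?mulr0 //.
  exact: leq_trans (ltn_Npart_block_of (ltn_ord t)) (leq_Npart _ lt_ti).
have -> : (levi_part ns g *m levi_solve ns g) i j =
    (g *m (colsub (shift_ord a) 1%:M *m lr_solve a g)) i j.
  by rewrite mxE [RHS]mxE; apply: eq_bigr => t _; apply: termE.
rewrite mulmxA mulmx_colsub mulmx1.
have [p ep] := shift_ordP (block_start_le lt_i); rewrite -ep.
have /matrixP/(_ p j) := rowsub_mulmx_lr_solve (lr_sub_unit (block_of_lt_size lt_i)).
by rewrite !mxE.
Qed.

End LeviSolve.

Section DiscreteValuationRing.
Variables (F : fieldType) (R : {pred F}) (pi : F).
Hypothesis HR : is_DVR R pi.

Lemma dvr_subring_closed : subring_closed R.
Proof. by case: HR => [[R1 RB] RM _ _ _]; split. Qed.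

HB.instance Definition _ := GRing.isSubringClosed.Build F R dvr_subring_closed.

Lemma dvr_pi_neq0 : pi != 0.
Proof. by case: HR => _ _ _ piVR _; apply: contraNneq piVR => ->; rewrite invr0 rpred0. Qed.

Lemma rpred_expz_ge0 (z : int) : 0 <= z -> pi ^ z \in R.
Proof. by case: z => // m _; rewrite -exprnP rpredX //; case: HR. Qed.

Lemma rpred_mulmx m n p (A : 'M[F]_(m, n)) (B : 'M[F]_(n, p)) :
  (forall i j, A i j \in R) -> (forall i j, B i j \in R) -> forall i j, (A *m B) i j \in R.
Proof. by move=> AR BR i j; rewrite mxE rpred_sum // => l _; rewrite rpredM. Qed.

Lemma rpred_det n (A : 'M[F]_n) : (forall i j, A i j \in R) -> \det A \in R.
Proof.
by move=> AR; rewrite rpred_sum // => s _; rewrite rpredM ?rpred_sign ?rpred_prod.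
Qed.

Lemma rpred_invmx n (A : 'M[F]_n) :
  (forall i j, A i j \in R) -> (\det A)^-1 \in R -> forall i j, invmx A i j \in R.
Proof.
move=> AR detVR i j; rewrite /invmx; case: ifP => // _.
by rewrite !mxE rpredM ?rpredMsign ?rpred_det // => ? ?; rewrite !mxE.
Qed.

Lemma GL_over_det n (U : 'M[F]_n) :
  GL_over R U -> [/\ \det U != 0, \det U \in R & (\det U)^-1 \in R].
Proof.
case=> Uu UR UVR; split; first by rewrite -unitfE -unitmxE.
  exact: rpred_det.
by rewrite -det_inv rpred_det.
Qed.

Lemma has_type_det r (A : 'M[F]_r) (k : 'I_r -> int) : has_type R pi A k ->
  exists u, [/\ u != 0, u \in R, u^-1 \in R & \det A = u * pi ^ (\sum_i k i)].
Proof.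
case=> U [V] [/GL_over_det[dU0 dUR dUVR] /GL_over_det[dV0 dVR dVVR] ->].
exists (\det U * \det V); split; rewrite ?mulf_neq0 ?invfM ?rpredM //.
rewrite !det_mulmx det_diag mulrAC; congr (_ * _).
by rewrite -prodr_expz ?dvr_pi_neq0 //; apply: eq_bigr => i _; rewrite mxE.
Qed.

Lemma has_type_unitmx r (A : 'M[F]_r) (k : 'I_r -> int) :
  has_type R pi A k -> A \in unitmx.
Proof.
case/has_type_det=> u [u0 _ _ detA].
by rewrite unitmxE unitfE detA mulf_neq0 ?expfz_neq0 ?dvr_pi_neq0.
Qed.

(* By Cauchy-Binet: the terms indexed by non-injective maps vanish, the others are
   divisible by pi ^ (sum of k over the image). *)
Lemma det_mul_diag_divisible r n (A : 'M[F]_(r, n)) (W : 'M[F]_(n, r))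
    (k : 'I_n -> int) (s : int) :
  (forall i j, A i j \in R) -> (forall i j, W i j \in R) ->
  (forall f : 'I_r -> 'I_n, injective f -> s <= \sum_i k (f i)) ->
  \det (A *m diag_mx (\row_j pi ^ k j) *m W) * pi ^ (- s) \in R.
Proof.
move=> AR WR ks; rewrite det_mulmx_rect mulr_suml rpred_sum // => f _.
have [/injectiveP injf | /injectivePn [i1 [i2 ne12 fi12]]] := boolP (injectiveb f); last first.
  by rewrite (determinant_alternate ne12) ?mulr0 ?mul0r ?rpred0 // => j; rewrite !mxE fi12.
have -> : \prod_i (A *m diag_mx (\row_j pi ^ k j)) i (f i) =
    (\prod_i A i (f i)) * pi ^ (\sum_i k (f i)).
  rewrite -prodr_expz ?dvr_pi_neq0 // -big_split.
  by apply: eq_bigr => i _; rewrite mul_mx_diag !mxE.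
rewrite mulrAC -!mulrA [pi ^ _ * (_ * _)]mulrA -expfzDr ?dvr_pi_neq0 //.
rewrite rpredM ?rpred_prod ?rpredM ?rpred_det ?rpred_expz_ge0 ?subr_ge0 ?ks //.
by move=> i j; rewrite mxE.
Qed.

Lemma lr_solve_in_R n a (g : 'M[F]_n) (k : 'I_n -> int) :
  (forall i j : 'I_n, (i <= j)%N -> k j <= k i) ->
  has_type R pi g k -> has_type R pi (lr_sub a g) (fun i => k (shift_ord a i)) ->
  forall p t, lr_solve a g p t \in R.
Proof.
move=> Hk [U [V [[_ UR _] [_ VR _] gE]]] Dtype p t.
have [u [_ _ uVR detD]] := has_type_det Dtype.
rewrite /lr_solve mulmx_invmx_cramer ?(has_type_unitmx Dtype) // detD.
pose c j := if j == p then t else shift_ord a j.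
have -> : \matrix_(i, j) (if j == p then rowsub (shift_ord a) g i t else lr_sub a g i j) =
    rowsub (shift_ord a) U *m diag_mx (\row_j pi ^ k j) *m colsub c V.
  rewrite mul_rowsub_mx -mxsub_mul -gE.
  by apply/matrixP => i j; rewrite !mxE /c; case: eqP.
rewrite invfM invr_expz -mulrA rpredM // mulrC.
rewrite det_mul_diag_divisible // => [i j|i j|f injf]; rewrite ?mxE //.
exact: sum_shift_ord_le_inj.
Qed.

Lemma levi_solve_GL_over ns (g : 'M[F]_(sumn ns)) (k : 'I_(sumn ns) -> int) :
  (forall i j : 'I_(sumn ns), (i <= j)%N -> k j <= k i) ->
  (forall b, (b < size ns)%N ->
     has_type R pi (lr_sub (Npart ns b) g) (fun i => k (shift_ord (Npart ns b) i))) ->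
  GL_over R (levi_solve ns g).
Proof.
move=> Hk Dtype; have Du b (lt_b : (b < size ns)%N) := has_type_unitmx (Dtype b lt_b).
have ZR i j : levi_solve ns g i j \in R.
  have lt_b := block_of_lt_size (ltn_ord i).
  have gtype := has_type_lr_sub0 (Npart0 ns) (Dtype 0%N (leq_ltn_trans (leq0n _) lt_b)).
  rewrite mxE rpred_mulmx // => p q; first by rewrite !mxE rpred_nat.
  exact: lr_solve_in_R Hk gtype (Dtype _ lt_b) p q.
split=> //; first by rewrite unitmxE (levi_solve_det Du) unitr1.
by apply: rpred_invmx => //; rewrite (levi_solve_det Du) invr1 rpred1.
Qed.

End DiscreteValuationRing.

Theorem lemma4p20 (F : fieldType) (R : {pred F}) (pi : F)
  (HR : is_DVR R pi) (ns : seq nat) (g : 'M[F]_(sumn ns))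
  (k : 'I_(sumn ns) -> int)
  (Hk : forall i j : 'I_(sumn ns), (i <= j)%N -> k j <= k i)
  (HgU : g \in unitmx) (HgP : block_lower ns g)
  (Htype : forall l : nat, (l < size ns)%N ->
     has_type R pi (lr_sub (Npart ns l) g)
       (fun i => k (shift_ord (Npart ns l) i))) :
  block_lower ns (invmx (levi_part ns g) *m g) /\
  GL_over R (invmx (levi_part ns g) *m g).
Proof.
have Du b (lt_b : (b < size ns)%N) := has_type_unitmx HR (Htype b lt_b).
have gE := levi_part_mul_solve Du HgP.
have /andP[gLu _] : (levi_part ns g \in unitmx) && (levi_solve ns g \in unitmx).
  by rewrite -unitmx_mul gE.
have -> : invmx (levi_part ns g) *m g = levi_solve ns g by rewrite -{2}gE mulKmx.
split; first exact: levi_solve_block_lower.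
exact: (levi_solve_GL_over HR Hk Htype).
Qed.
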